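(* Let $\mathcal{M}$ be a category with finite products, regarded as a symmetric monoidal category $(\mathcal{M},\times,1)$ via a choice of binary products and a terminal object $1$. Then there is an isomorphism of categories \[ \mathbf{SColax}\big((\Phi,+,0),(\mathcal{M},\times,1)\big)\;\cong\;[\Gamma^{\mathrm{op}},\mathcal{M}]. \]
   Context: $\Phi$ is the skeletal category of finite sets: its objects are the sets $n=\{0,\dots,n-1\}$ for $n\ge 0$ and its morphisms are all functions; it is a symmetric monoidal category under disjoint union $+$ (with $m+n$ identified with $\{0,\dots,m+n-1\}$ in the evident order-preserving way on each summand) and unit $0=\emptyset$. $\Gamma^{\mathrm{op}}$ is the skeletal category of finite based sets: objects $[n]=\{0,1,\dots,n\}$ for $n\ge 0$, morphisms $[m]\to[n]$ the functions $g$ with $g(0)=0$. $[\Gamma^{\mathrm{op}},\mathcal{M}]$ is the category of functors $\Gamma^{\mathrm{op}}\to\mathcal{M}$ and natural transformations. A colax symmetric monoidal functor $(X,\xi):(\mathcal{L},\otimes,I)\to(\mathcal{M},\otimes,I)$ between symmetric monoidal categories is a functor $X$ together with morphisms $\xi_{A,B}:X(A\otimes B)\to X(A)\otimes X(B)$, natural in $A,B$, and $\xi_0:X(I)\to I$ (not required to be invertible), satisfying the usual coassociativity and counit axioms of a monoidal functor (with these maps in place of isomorphisms) and compatibility with the symmetries. A monoidal transformation $\sigma:(W,\omega)\to(X,\xi)$ is a natural transformation $\sigma:W\to X$ with $\xi_{A,B}\circ\sigma_{A\otimes B}=(\sigma_A\otimes\sigma_B)\circ\omega_{A,B}$ and $\xi_0\circ\sigma_I=\omega_0$.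 $\mathbf{SColax}(\mathcal{L},\mathcal{M})$ denotes the category of colax symmetric monoidal functors and monoidal transformations. *)

From Stdlib Require Import ProofIrrelevance FunctionalExtensionality.
From mathcomp Require Import all_boot.

Set Implicit Arguments.
Unset Strict Implicit.
Unset Printing Implicit Defensive.

Record Category := {
  ob :> Type;
  hom : ob -> ob -> Type;
  idm : forall A, hom A A;
  comp : forall A B C, hom B C -> hom A B -> hom A C;
  comp_id_l : forall A B (f : hom A B), comp (idm B) f = f;
  comp_id_r : forall A B (f : hom A B), comp f (idm A) = f;
  comp_assoc : forall A B C D (h : hom C D) (g : hom B C) (f : hom A B),
      comp h (comp g f) = comp (comp h g) f }.

Arguments hom {c} A B.
Arguments idm {c} A.
Arguments comp {c A B C} g f.

Notation "g \oc f" := (comp g f) (at level 40, left associativity).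

Record Functor (C D : Category) := {
  fob :> C -> D;
  fmap : forall A B, hom A B -> hom (fob A) (fob B);
  fmap_id : forall A, fmap (idm A) = idm (fob A);
  fmap_comp : forall A B E (g : hom B E) (f : hom A B),
      fmap (g \oc f) = fmap g \oc fmap f }.

Arguments fmap {C D} _ {A B} _.

Record NatTrans (C D : Category) (F G : Functor C D) := {
  ntc :> forall A, hom (F A) (G A);
  nt_natural : forall A B (f : hom A B), fmap G f \oc ntc A = ntc B \oc fmap F f }.

Lemma nattrans_eq (C D : Category) (F G : Functor C D) (s t : NatTrans F G) :
  (forall A, s A = t A) -> s = t.
Proof.
case: s => s hs; case: t => t ht /= e.
have E : s = t by apply: functional_extensionality_dep.
subst t; f_equal; apply: proof_irrelevance.
Qed.

Definition nt_id (C D : Category) (F : Functor C D) : NatTrans F F.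
Proof.
refine {| ntc := fun A => idm (F A) |}.
by move=> A B f; rewrite comp_id_l comp_id_r.
Defined.

Definition nt_comp (C D : Category) (F G H : Functor C D)
  (t : NatTrans G H) (s : NatTrans F G) : NatTrans F H.
Proof.
refine {| ntc := fun A => t A \oc s A |}.
move=> A B f.
by rewrite comp_assoc nt_natural -comp_assoc nt_natural comp_assoc.
Defined.

Definition FunctorCat (C D : Category) : Category.
Proof.
refine {| ob := Functor C D;
          hom := fun F G => NatTrans F G;
          idm := @nt_id C D;
          comp := fun F G H t s => nt_comp t s |}.
- by move=> F G f; apply: nattrans_eq => A /=; rewrite comp_id_l.
- by move=> F G f; apply: nattrans_eq => A /=; rewrite comp_id_r.
- by move=> F G H K h g f; apply: nattrans_eq => A /=; rewrite comp_assoc.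
Defined.

Definition hom_cast (C : Category) (A A' B B' : C)
  (e1 : A = A') (e2 : B = B') (f : hom A B) : hom A' B' :=
  eq_rect A (fun X => hom X B') (eq_rect B (fun Y => hom A Y) f B' e2) A' e1.

Definition cat_iso (C D : Category) : Prop :=
  exists (F : Functor C D) (G : Functor D C),
    (exists eGF : forall A : C, G (F A) = A,
        forall (A B : C) (f : hom A B),
          hom_cast (eGF A) (eGF B) (fmap G (fmap F f)) = f) /\
    (exists eFG : forall B : D, F (G B) = B,
        forall (A B : D) (f : hom A B),
          hom_cast (eFG A) (eFG B) (fmap F (fmap G f)) = f).

Record Cartesian (M : Category) := {
  cone : M;
  cbang : forall A : M, hom A cone;
  cbang_uniq : forall (A : M) (f : hom A cone), f = cbang A;
  cprod : M -> M -> M;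
  cpr1 : forall A B : M, hom (cprod A B) A;
  cpr2 : forall A B : M, hom (cprod A B) B;
  cpair : forall X A B : M, hom X A -> hom X B -> hom X (cprod A B);
  cpair_pr1 : forall X A B (f : hom X A) (g : hom X B), cpr1 A B \oc cpair f g = f;
  cpair_pr2 : forall X A B (f : hom X A) (g : hom X B), cpr2 A B \oc cpair f g = g;
  cpair_uniq : forall X A B (h : hom X (cprod A B)),
      h = cpair (cpr1 A B \oc h) (cpr2 A B \oc h) }.

Arguments cone {M} c.
Arguments cbang {M c} A.
Arguments cprod {M} c A B.
Arguments cpr1 {M c A B}.
Arguments cpr2 {M c A B}.
Arguments cpair {M c X A B} f g.

Section CartesianMonoidal.
Variables (M : Category) (P : Cartesian M).

Definition ctens (A B A' B' : M) (f : hom A A') (g : hom B B') :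
  hom (cprod P A B) (cprod P A' B') :=
  cpair (f \oc cpr1) (g \oc cpr2).

Definition cassoc (A B C : M) :
  hom (cprod P (cprod P A B) C) (cprod P A (cprod P B C)) :=
  cpair (cpr1 \oc cpr1) (cpair (cpr2 \oc cpr1) cpr2).

Definition clunit (A : M) : hom (cprod P (cone P) A) A := cpr2.
Definition crunit (A : M) : hom (cprod P A (cone P)) A := cpr1.
Definition csym (A B : M) : hom (cprod P A B) (cprod P B A) := cpair cpr2 cpr1.

Lemma cpair_comp (X Y A B : M) (f : hom Y A) (g : hom Y B) (h : hom X Y) :
  cpair f g \oc h = cpair (f \oc h) (g \oc h) :> hom X (cprod P A B).
Proof.
by rewrite [LHS](cpair_uniq) !comp_assoc cpair_pr1 cpair_pr2.
Qed.

Lemma cpair_eta (X A B : M) (h : hom X (cprod P A B)) :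
  cpair (cpr1 \oc h) (cpr2 \oc h) = h.
Proof. by rewrite -cpair_uniq. Qed.

End CartesianMonoidal.

Arguments ctens {M} P {A B A' B'} f g.
Arguments cassoc {M} P A B C.
Arguments clunit {M} P A.
Arguments crunit {M} P A.
Arguments csym {M} P A B.

Definition Phi : Category.
Proof.
refine {| ob := nat;
          hom := fun n m => 'I_n -> 'I_m;
          idm := fun n => fun i => i;
          comp := fun a b c g f => fun i => g (f i) |}; by [].
Defined.

(* Disjoint union on morphisms: m + n = {0,...,m+n-1}, first summand
   embedded as {0..m-1}, second as {m..m+n-1} (order preserving). *)
Definition phi_tens (a b a' b' : nat) (f : 'I_a -> 'I_a') (g : 'I_b -> 'I_b') :
  'I_(a + b) -> 'I_(a' + b') :=
  fun i => match split i with
           | inl j => @lshift a' b' (f j)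
           | inr k => @rshift a' b' (g k)
           end.

Definition phi_assoc (a b c : nat) : 'I_(a + b + c) -> 'I_(a + (b + c)) :=
  cast_ord (esym (addnA a b c)).

Definition phi_lunit (a : nat) : 'I_(0 + a) -> 'I_a := cast_ord (add0n a).
Definition phi_runit (a : nat) : 'I_(a + 0) -> 'I_a := cast_ord (addn0 a).

Definition phi_sym (a b : nat) : 'I_(a + b) -> 'I_(b + a) :=
  fun i => match split i with
           | inl j => @rshift b a j
           | inr k => @lshift b a k
           end.

Arguments phi_assoc : clear implicits.
Arguments phi_lunit : clear implicits.
Arguments phi_runit : clear implicits.
Arguments phi_sym : clear implicits.

Record SColaxFun (M : Category) (P : Cartesian M) := {
  cx_fun :> Functor Phi M;
  cx_xi : forall a b : nat,
      hom (cx_fun (a + b)) (cprod P (cx_fun a) (cx_fun b));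
  cx_xi0 : hom (cx_fun 0) (cone P);
  cx_nat : forall (a b a' b' : nat) (f : 'I_a -> 'I_a') (g : 'I_b -> 'I_b'),
      cx_xi a' b' \oc fmap cx_fun (phi_tens f g : @hom Phi (a + b) (a' + b'))
      = ctens P (fmap cx_fun (f : @hom Phi a a')) (fmap cx_fun (g : @hom Phi b b'))
          \oc cx_xi a b;
  cx_coassoc : forall a b c : nat,
      cassoc P _ _ _ \oc ctens P (cx_xi a b) (idm _) \oc cx_xi (a + b) c
      = ctens P (idm _) (cx_xi b c) \oc cx_xi a (b + c)
          \oc fmap cx_fun (phi_assoc a b c : @hom Phi (a + b + c) (a + (b + c)));
  cx_lunit : forall a : nat,
      clunit P _ \oc ctens P cx_xi0 (idm _) \oc cx_xi 0 a
      = fmap cx_fun (phi_lunit a : @hom Phi (0 + a) a);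
  cx_runit : forall a : nat,
      crunit P _ \oc ctens P (idm _) cx_xi0 \oc cx_xi a 0
      = fmap cx_fun (phi_runit a : @hom Phi (a + 0) a);
  cx_sym : forall a b : nat,
      csym P _ _ \oc cx_xi a b
      = cx_xi b a \oc fmap cx_fun (phi_sym a b : @hom Phi (a + b) (b + a)) }.

Arguments cx_xi {M P} s a b.
Arguments cx_xi0 {M P} s.

Record MonTrans (M : Category) (P : Cartesian M) (W X : SColaxFun P) := {
  mt_nt :> NatTrans W X;
  mt_xi : forall a b : nat,
      cx_xi X a b \oc mt_nt (a + b) = ctens P (mt_nt a) (mt_nt b) \oc cx_xi W a b;
  mt_xi0 : cx_xi0 X \oc mt_nt 0 = cx_xi0 W }.

Lemma montrans_eq (M : Category) (P : Cartesian M) (W X : SColaxFun P)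
  (s t : MonTrans W X) : mt_nt s = mt_nt t -> s = t.
Proof.
case: s => s hs hs0; case: t => t ht ht0 /= e.
subst t; f_equal; apply: proof_irrelevance.
Qed.

Definition mt_id (M : Category) (P : Cartesian M) (X : SColaxFun P) : MonTrans X X.
Proof.
refine {| mt_nt := nt_id X |}.
- move=> a b /=; rewrite comp_id_r /ctens cpair_comp !comp_id_l.
  by rewrite cpair_eta.
- by rewrite /= comp_id_r.
Defined.

Definition mt_comp (M : Category) (P : Cartesian M) (X Y Z : SColaxFun P)
  (t : MonTrans Y Z) (s : MonTrans X Y) : MonTrans X Z.
Proof.
refine {| mt_nt := nt_comp t s |}.
- move=> a b /=.
  rewrite comp_assoc mt_xi -comp_assoc mt_xi comp_assoc.
  congr (_ \oc _); by rewrite /ctens cpair_comp -!comp_assoc cpair_pr1 cpair_pr2.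
- move=> /=; rewrite comp_assoc; etransitivity; last exact: (mt_xi0 s).
  by congr (_ \oc _); exact: (mt_xi0 t).
Defined.

Definition SColax (M : Category) (P : Cartesian M) : Category.
Proof.
refine {| ob := SColaxFun P;
          hom := fun X Y => MonTrans X Y;
          idm := @mt_id M P;
          comp := fun X Y Z t s => mt_comp t s |}.
- by move=> X Y f; apply: montrans_eq; apply: nattrans_eq => A /=; rewrite comp_id_l.
- by move=> X Y f; apply: montrans_eq; apply: nattrans_eq => A /=; rewrite comp_id_r.
- by move=> X Y Z W h g f; apply: montrans_eq; apply: nattrans_eq => A /=;
     rewrite comp_assoc.
Defined.

(* Gamma^op: finite based sets [n] = {0,1,...,n}, basepoint 0          *)

Definition based_map (m n : nat) := {f : 'I_m.+1 -> 'I_n.+1 | f ord0 = ord0}.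

Lemma based_map_eq (m n : nat) (f g : based_map m n) : sval f = sval g -> f = g.
Proof.
case: f => f hf; case: g => g hg /= e; subst g; f_equal; apply: proof_irrelevance.
Qed.

Definition based_id (n : nat) : based_map n n := exist _ (fun i => i) erefl.

Definition based_comp (a b c : nat) (g : based_map b c) (f : based_map a b) :
  based_map a c.
Proof.
exists (fun i => sval g (sval f i)).
by rewrite (proj2_sig f) (proj2_sig g).
Defined.

Definition GammaOp : Category.
Proof.
refine {| ob := nat;
          hom := based_map;
          idm := based_id;
          comp := based_comp |}.
- by move=> A B f; apply: based_map_eq.
- by move=> A B f; apply: based_map_eq.
- by move=> A B C D h g f; apply: based_map_eq.
Defined.

(* A based map [m] -> [n] is a partial map m -> n; sending the undefined
   points to an extra point turns it into a total map m -> n + 1.  A colax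
   functor X therefore acts on based maps by X(g) := pi o X(g^), where
   pi = pr1 o xi_{n,1} : X(n + 1) -> X(n) forgets the extra point; the counit
   axiom gives identities and coassociativity gives composites.  Conversely a
   functor Y on Gamma^op restricts along f |-> f_+ to Phi, with
   xi_{a,b} = <Y(p1), Y(p2)> for the based projections of a + b onto its
   summands, and xi_0 the unique map to 1.  The two constructions are inverse
   on the nose: the symmetry axiom recovers the second component of xi from
   the first, and xi_0 is forced because 1 is terminal. *)
From Stdlib Require Import ProofIrrelevance FunctionalExtensionality.
From mathcomp Require Import all_boot.

Set Implicit Arguments.
Unset Strict Implicit.
Unset Printing Implicit Defensive.

Lemma split_lshift m n (j : 'I_m) : split (lshift n j) = inl j.
Proof. exact: (@unsplitK m n (inl j)). Qed.

Lemma split_rshift m n (k : 'I_n) : split (rshift m k) = inr k.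
Proof. exact: (@unsplitK m n (inr k)). Qed.

Lemma phi_tens_lshift a b a' b' (f : 'I_a -> 'I_a') (g : 'I_b -> 'I_b') j :
  phi_tens f g (lshift b j) = lshift b' (f j).
Proof. by rewrite /phi_tens split_lshift. Qed.

Lemma phi_tens_rshift a b a' b' (f : 'I_a -> 'I_a') (g : 'I_b -> 'I_b') k :
  phi_tens f g (rshift a k) = rshift a' (g k).
Proof. by rewrite /phi_tens split_rshift. Qed.

Lemma phi_sym_lshift a b j : phi_sym a b (lshift b j) = rshift b j.
Proof. by rewrite /phi_sym split_lshift. Qed.

Lemma phi_sym_rshift a b k : phi_sym a b (rshift a k) = lshift a k.
Proof. by rewrite /phi_sym split_rshift. Qed.

Lemma phi_assoc_lshift a b c (j : 'I_a) :
  phi_assoc a b c (lshift c (lshift b j)) = lshift (b + c) j.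
Proof. exact: val_inj. Qed.

Lemma phi_assoc_mshift a b c (j : 'I_b) :
  phi_assoc a b c (lshift c (rshift a j)) = rshift a (lshift c j).
Proof. exact: val_inj. Qed.

Lemma phi_assoc_rshift a b c (j : 'I_c) :
  phi_assoc a b c (rshift (a + b) j) = rshift a (rshift b j).
Proof. by apply: val_inj; rewrite /= addnA. Qed.

Variant split3_spec a b c (i : 'I_(a + b + c)) : Type :=
| Split3Lo (j : 'I_a) of i = lshift c (lshift b j)
| Split3Mid (j : 'I_b) of i = lshift c (rshift a j)
| Split3Hi (j : 'I_c) of i = rshift (a + b) j.

Lemma split3P a b c (i : 'I_(a + b + c)) : split3_spec i.
Proof.
case: (split_ordP i) => [j ->|j ->]; last exact: Split3Hi.
by case: (split_ordP j) => [k ->|k ->]; [apply: Split3Lo | apply: Split3Mid].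
Qed.

Definition total_of_partial m n (o : 'I_m -> option 'I_n) : 'I_m -> 'I_(n + 1) :=
  fun i => if o i is Some j then lshift 1 j else rshift n ord0.

Definition to_ord1 b : 'I_b -> 'I_1 := fun=> ord0.

Definition extend_partial a b (o : 'I_a -> option 'I_b) (i : 'I_a.+1) : 'I_b.+1 :=
  if unlift ord0 i is Some j then oapp (lift ord0) ord0 (o j) else ord0.

Lemma extend_partial0 a b (o : 'I_a -> option 'I_b) : extend_partial o ord0 = ord0.
Proof. by rewrite /extend_partial unlift_none. Qed.

Definition based_of_partial a b (o : 'I_a -> option 'I_b) : based_map a b :=
  exist _ (extend_partial o) (extend_partial0 o).

Definition partial_of_based m n (g : based_map m n) : 'I_m -> option 'I_n :=
  fun i => unlift ord0 (sval g (lift ord0 i)).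

Lemma partial_of_basedK m n : cancel (@partial_of_based m n) (@based_of_partial m n).
Proof.
move=> g; apply: based_map_eq; apply: functional_extensionality => i /=.
rewrite /extend_partial /partial_of_based.
case: unliftP => [j ->|->]; last by rewrite (proj2_sig g).
by case: unliftP => [k ->|->].
Qed.

Lemma based_of_partialK a b : cancel (@based_of_partial a b) (@partial_of_based a b).
Proof.
move=> o; apply: functional_extensionality => i.
by rewrite /partial_of_based /= /extend_partial liftK; case: (o i) => [k|] /=;
  rewrite ?liftK ?unlift_none.
Qed.

Lemma eq_based_of_partial a b (o o' : 'I_a -> option 'I_b) :
  o =1 o' -> based_of_partial o = based_of_partial o'.
Proof. by move=> eq_o; congr based_of_partial; apply: functional_extensionality. Qed.

Lemma based_comp_partial a b c (o1 : 'I_a -> option 'I_b) (o2 : 'I_b -> option 'I_c) :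
  based_comp (based_of_partial o2) (based_of_partial o1)
  = based_of_partial (fun i => obind o2 (o1 i)).
Proof.
apply: based_map_eq; apply: functional_extensionality => i /=.
rewrite /extend_partial; case: (unliftP ord0 i) => [j|] _ /=; rewrite ?unlift_none //.
by case: (o1 j) => [k|] /=; rewrite ?liftK ?unlift_none.
Qed.

Definition based_of_fun a b (f : 'I_a -> 'I_b) : based_map a b :=
  based_of_partial (fun i => Some (f i)).

Definition based_proj1 a b : based_map (a + b) a :=
  based_of_partial (fun i => if split i is inl j then Some j else None).

Definition based_proj2 a b : based_map (a + b) b :=
  based_of_partial (fun i => if split i is inr k then Some k else None).

Lemma functor_ext (C D : Category) (o : C -> D) m1 m2 p1 p2 q1 q2 :
  (forall A B f, m1 A B f = m2 A B f) ->
  @Build_Functor C D o m1 p1 q1 = @Build_Functor C D o m2 p2 q2.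
Proof.
move=> eq_m.
have {eq_m} E : m1 = m2.
  apply: functional_extensionality_dep => A; apply: functional_extensionality_dep => B.
  exact: functional_extensionality.
by subst m2; f_equal; apply: proof_irrelevance.
Qed.

Lemma scolax_ext (M : Category) (P : Cartesian M) (o : nat -> M) m1 m2 p1 p2 q1 q2
    xi1 xi2 xi01 xi02 n1 n2 c1 c2 l1 l2 r1 r2 s1 s2 :
  (forall a b f, m1 a b f = m2 a b f) -> (forall a b, xi1 a b = xi2 a b) ->
  xi01 = xi02 ->
  @Build_SColaxFun M P (@Build_Functor Phi M o m1 p1 q1) xi1 xi01 n1 c1 l1 r1 s1 =
  @Build_SColaxFun M P (@Build_Functor Phi M o m2 p2 q2) xi2 xi02 n2 c2 l2 r2 s2.
Proof.
move=> eq_m eq_xi eq_xi0.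
have {eq_m} E : m1 = m2.
  apply: functional_extensionality_dep => A; apply: functional_extensionality_dep => B.
  exact: functional_extensionality.
subst m2; have Ep : p1 = p2 by apply: proof_irrelevance.
have Eq : q1 = q2 by apply: proof_irrelevance.
have {eq_xi} Exi : xi1 = xi2.
  by apply: functional_extensionality_dep => a; apply: functional_extensionality_dep.
by subst p2 q2 xi2 xi02; f_equal; apply: proof_irrelevance.
Qed.

Lemma hom_cast_refl (C : Category) (A B : C) (e1 : A = A) (e2 : B = B) (f : hom A B) :
  hom_cast e1 e2 f = f.
Proof. by rewrite (proof_irrelevance _ e1 erefl) (proof_irrelevance _ e2 erefl). Qed.

Lemma hom_cast_nattrans (C D : Category) (F1 F2 G1 G2 : FunctorCat C D)
    (e1 : F1 = F2) (e2 : G1 = G2) (s : NatTrans F1 G1) (t : NatTrans F2 G2) :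
  (forall A (e1' : F1 A = F2 A) (e2' : G1 A = G2 A), hom_cast e1' e2' (s A) = t A) ->
  hom_cast e1 e2 s = t.
Proof.
move: t; case: F2 / e1; case: G2 / e2 => t eq_st.
by apply: nattrans_eq => A; apply: (eq_st A erefl erefl).
Qed.

Lemma hom_cast_montrans (M : Category) (P : Cartesian M) (X1 X2 Z1 Z2 : SColax P)
    (e1 : X1 = X2) (e2 : Z1 = Z2) (s : MonTrans X1 Z1) (t : MonTrans X2 Z2) :
  (forall n (e1' : X1 n = X2 n) (e2' : Z1 n = Z2 n), hom_cast e1' e2' (s n) = t n) ->
  hom_cast e1 e2 s = t.
Proof.
move: t; case: X2 / e1; case: Z2 / e2 => t eq_st.
by apply: montrans_eq; apply: nattrans_eq => n; apply: (eq_st n erefl erefl).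
Qed.

Section Cartesian.
Variables (M : Category) (P : Cartesian M).

Lemma cprod_ext (X A B : M) (h h' : hom X (cprod P A B)) :
  cpr1 \oc h = cpr1 \oc h' -> cpr2 \oc h = cpr2 \oc h' -> h = h'.
Proof. by move=> e1 e2; rewrite (cpair_uniq h) (cpair_uniq h') e1 e2. Qed.

Lemma cpr1_ctens (A B A' B' : M) (f : hom A A') (g : hom B B') :
  cpr1 \oc ctens P f g = f \oc cpr1.
Proof. exact: cpair_pr1. Qed.

Lemma cpr1_cassoc (A B C : M) : cpr1 \oc cassoc P A B C = cpr1 \oc cpr1.
Proof. exact: cpair_pr1. Qed.

Lemma cpr1_csym (A B : M) : cpr1 \oc csym P A B = cpr2.
Proof. exact: cpair_pr1. Qed.

Lemma cpr1_cpairA (X Z A B : M) (f : hom X A) (g : hom X B) (k : hom Z X) :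
  @cpr1 _ P _ _ \oc (cpair f g \oc k) = f \oc k.
Proof. by rewrite comp_assoc cpair_pr1. Qed.

Lemma cpr2_cpairA (X Z A B : M) (f : hom X A) (g : hom X B) (k : hom Z X) :
  @cpr2 _ P _ _ \oc (cpair f g \oc k) = g \oc k.
Proof. by rewrite comp_assoc cpair_pr2. Qed.

End Cartesian.

Section FunctorRules.
Variable M : Category.

Lemma fmap_Phi_id (X : Functor Phi M) n : fmap X (fun i : 'I_n => i) = idm (X n).
Proof. exact: (fmap_id X n). Qed.

Lemma fmap_Phi_comp (X : Functor Phi M) a b c (g : 'I_b -> 'I_c) (f : 'I_a -> 'I_b) :
  fmap X (fun i => g (f i)) = fmap X g \oc fmap X f.
Proof. exact: (fmap_comp X g f). Qed.

Lemma fmap_GammaOp_comp (Y : Functor GammaOp M) a b c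
    (g : based_map b c) (f : based_map a b) :
  fmap Y g \oc fmap Y f = fmap Y (based_comp g f : @hom GammaOp a c).
Proof. by rewrite (fmap_comp Y g f). Qed.

Lemma fmap_GammaOp_compA (Y : Functor GammaOp M) (Z : M) a b c
    (g : based_map b c) (f : based_map a b) (k : hom Z (Y a)) :
  fmap Y g \oc (fmap Y f \oc k) = fmap Y (based_comp g f : @hom GammaOp a c) \oc k.
Proof. by rewrite comp_assoc fmap_GammaOp_comp. Qed.

End FunctorRules.

(** * From colax functors to functors on Gamma^op *)

Section ColaxToGamma.
Variables (M : Category) (P : Cartesian M).

Section Object.
Variable X : SColaxFun P.

Definition cx_proj n : hom (X (n + 1)) (X n) := cpr1 \oc cx_xi X n 1.

Lemma cx_proj_tens a a' b (f : 'I_a -> 'I_a') (c : 'I_b -> 'I_1) :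
  cx_proj a' \oc fmap X (phi_tens f c) = fmap X f \oc (cpr1 \oc cx_xi X a b).
Proof. by rewrite /cx_proj -comp_assoc cx_nat comp_assoc cpr1_ctens -comp_assoc. Qed.

Lemma cx_proj_tens1 a a' (f : 'I_a -> 'I_a') (c : 'I_1 -> 'I_1) :
  cx_proj a' \oc fmap X (phi_tens f c) = fmap X f \oc cx_proj a.
Proof. exact: cx_proj_tens. Qed.

Lemma cx_proj_lshift n : cx_proj n \oc fmap X (lshift 1 : 'I_n -> 'I_(n + 1)) = idm (X n).
Proof.
have -> : (lshift 1 : 'I_n -> 'I_(n + 1)) =
    fun i => phi_tens (fun j => j) (@to_ord1 0) (cast_ord (esym (addn0 n)) i).
  apply: functional_extensionality => i; rewrite /phi_tens.
  case: split_ordP => [j Ej|[]//]; apply: val_inj.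
  by move/(congr1 val): Ej.
rewrite fmap_Phi_comp comp_assoc cx_proj_tens fmap_Phi_id comp_id_l.
have -> : cpr1 \oc cx_xi X n 0 = fmap X (phi_runit n).
  by rewrite -cx_runit /crunit cpr1_ctens comp_id_l.
rewrite -fmap_Phi_comp -(fmap_Phi_id X n); congr (fmap X _).
by apply: functional_extensionality => i; apply: val_inj.
Qed.

(* Coassociativity with the second factor split as 1 + 1: forgetting the
   last two points one at a time is the same as forgetting both at once. *)
Lemma cx_proj_proj n :
  cx_proj n \oc cx_proj (n + 1) =
  cx_proj n \oc fmap X (fun i => phi_tens (fun j => j) (@to_ord1 (1 + 1)) (phi_assoc n 1 1 i)).
Proof.
rewrite fmap_Phi_comp comp_assoc cx_proj_tens fmap_Phi_id comp_id_l.
have := congr1 (fun h => cpr1 \oc h) (cx_coassoc X n 1 1).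
rewrite /= !comp_assoc cpr1_cassoc cpr1_ctens comp_id_l.
rewrite -(comp_assoc cpr1 cpr1) cpr1_ctens -!comp_assoc => <-.
by rewrite /cx_proj !comp_assoc.
Qed.

Definition gamma_fmap m n (g : based_map m n) : hom (X m) (X n) :=
  cx_proj n \oc fmap X (total_of_partial (partial_of_based g)).

Lemma gamma_fmap_id n : gamma_fmap (based_id n) = idm (X n).
Proof.
rewrite /gamma_fmap -[RHS](cx_proj_lshift n); congr (_ \oc fmap X _).
by apply: functional_extensionality => i; rewrite /total_of_partial /partial_of_based /= liftK.
Qed.

Lemma gamma_fmap_comp a b c (g : based_map b c) (f : based_map a b) :
  gamma_fmap (based_comp g f) = gamma_fmap g \oc gamma_fmap f.
Proof.
rewrite -(partial_of_basedK g) -(partial_of_basedK f) based_comp_partial /gamma_fmap.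
rewrite !based_of_partialK; move: (partial_of_based g) (partial_of_based f) => o2 o1.
rewrite [RHS]comp_assoc -(comp_assoc (cx_proj c)).
rewrite -(cx_proj_tens1 (total_of_partial o2) (fun i => i)).
rewrite comp_assoc cx_proj_proj -!comp_assoc -!fmap_Phi_comp.
congr (cpr1 \oc (_ \oc fmap X _)); apply: functional_extensionality => i.
rewrite /total_of_partial; case: (o1 i) => [j|] /=; last first.
  by rewrite phi_tens_rshift phi_assoc_rshift phi_tens_rshift.
rewrite phi_tens_lshift; case: (o2 j) => [k|] /=.
  by rewrite phi_assoc_lshift phi_tens_lshift.
by rewrite phi_assoc_mshift phi_tens_rshift.
Qed.

Definition gamma_of_colax : Functor GammaOp M :=
  {| fob := fun n : GammaOp => X n;
     fmap := gamma_fmap;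
     fmap_id := gamma_fmap_id;
     fmap_comp := gamma_fmap_comp |}.

End Object.

Lemma gamma_fmap_natural (X X' : SColaxFun P) (s : MonTrans X X') m n (g : based_map m n) :
  gamma_fmap X' g \oc s m = s n \oc gamma_fmap X g.
Proof.
rewrite /gamma_fmap /cx_proj -!comp_assoc nt_natural !comp_assoc.
by rewrite -(comp_assoc cpr1) mt_xi comp_assoc cpr1_ctens -!comp_assoc.
Qed.

Definition nattrans_of_montrans (X X' : SColaxFun P) (s : MonTrans X X') :
  NatTrans (gamma_of_colax X) (gamma_of_colax X') :=
  @Build_NatTrans GammaOp M (gamma_of_colax X) (gamma_of_colax X') (fun n => s n)
    (gamma_fmap_natural s).

Definition SColax_to_Gamma : Functor (SColax P) (FunctorCat GammaOp M).
Proof.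
refine {| fob := (gamma_of_colax : SColax P -> FunctorCat GammaOp M);
          fmap := fun X X' s => nattrans_of_montrans s |}.
- by move=> X; apply: nattrans_eq.
- by move=> X Y Z g f; apply: nattrans_eq.
Defined.

End ColaxToGamma.

(** * From functors on Gamma^op to colax functors *)

Section GammaToColax.
Variables (M : Category) (P : Cartesian M).

Section Restriction.
Variable Y : Functor GammaOp M.

Definition phi_fmap a b (f : 'I_a -> 'I_b) : hom (Y a) (Y b) :=
  fmap Y (based_of_fun f : @hom GammaOp a b).

Lemma phi_fmap_id (n : Phi) : phi_fmap (idm n) = idm (Y n).
Proof.
rewrite /phi_fmap -(fmap_id Y n); congr (fmap Y _); apply: based_map_eq => /=.
by apply: functional_extensionality => i; rewrite /extend_partial; case: unliftP => [j|] ->.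
Qed.

Lemma phi_fmap_comp (a b c : Phi) (g : hom b c) (f : hom a b) :
  phi_fmap (g \oc f) = phi_fmap g \oc phi_fmap f.
Proof. by rewrite /phi_fmap fmap_GammaOp_comp /based_of_fun based_comp_partial. Qed.

Definition phi_restriction : Functor Phi M :=
  {| fob := fun n : Phi => Y n;
     fmap := phi_fmap;
     fmap_id := phi_fmap_id;
     fmap_comp := phi_fmap_comp |}.

Definition gamma_xi a b : hom (Y (a + b)) (cprod P (Y a) (Y b)) :=
  cpair (fmap Y (based_proj1 a b : @hom GammaOp (a + b) a))
        (fmap Y (based_proj2 a b : @hom GammaOp (a + b) b)).

End Restriction.

(* Every colax axiom reduces to an equality of based maps, checked pointwise
   on the summands. *)
Ltac cart_simpl :=
  rewrite /= /ctens /cassoc /csym /clunit /crunit /phi_fmap /gamma_xi;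
  repeat progress rewrite -?comp_assoc ?cpr1_cpairA ?cpr2_cpairA ?cpair_pr1 ?cpair_pr2
    ?comp_id_l ?comp_id_r ?fmap_GammaOp_compA ?fmap_GammaOp_comp.

Section ColaxStructure.
Variable Y : Functor GammaOp M.

Lemma gamma_xi_natural (a b a' b' : nat) (f : 'I_a -> 'I_a') (g : 'I_b -> 'I_b') :
  gamma_xi Y a' b' \oc fmap (phi_restriction Y) (phi_tens f g : @hom Phi (a + b) (a' + b'))
  = ctens P (fmap (phi_restriction Y) (f : @hom Phi a a'))
            (fmap (phi_restriction Y) (g : @hom Phi b b')) \oc gamma_xi Y a b.
Proof.
apply: cprod_ext; cart_simpl; congr (fmap Y _);
  rewrite /based_proj1 /based_proj2 /based_of_fun !based_comp_partial;
  apply: eq_based_of_partial => i /=.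
all: by case: (split_ordP i) => j ->;
  rewrite ?phi_tens_lshift ?phi_tens_rshift ?split_lshift ?split_rshift.
Qed.

Lemma gamma_xi_coassoc (a b c : nat) :
  cassoc P _ _ _ \oc ctens P (gamma_xi Y a b) (idm _) \oc gamma_xi Y (a + b) c
  = ctens P (idm _) (gamma_xi Y b c) \oc gamma_xi Y a (b + c)
      \oc fmap (phi_restriction Y) (phi_assoc a b c : @hom Phi (a + b + c) (a + (b + c))).
Proof.
apply: cprod_ext; last apply: cprod_ext; cart_simpl.
all: try congr (fmap Y _); rewrite /based_proj1 /based_proj2 /based_of_fun !based_comp_partial.
all: apply: eq_based_of_partial => i /=.
all: by case: (split3P i) => j ->;
  rewrite ?phi_assoc_lshift ?phi_assoc_mshift ?phi_assoc_rshift ?split_lshift ?split_rshift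
    /= ?split_lshift ?split_rshift.
Qed.

Lemma gamma_xi_lunit (a : nat) :
  clunit P _ \oc ctens P (cbang (Y 0)) (idm _) \oc gamma_xi Y 0 a
  = fmap (phi_restriction Y) (phi_lunit a : @hom Phi (0 + a) a).
Proof.
cart_simpl; congr (fmap Y _); apply: eq_based_of_partial => i.
case: (split_ordP i) => [[]//|k ->].
by congr Some; apply: val_inj.
Qed.

Lemma gamma_xi_runit (a : nat) :
  crunit P _ \oc ctens P (idm _) (cbang (Y 0)) \oc gamma_xi Y a 0
  = fmap (phi_restriction Y) (phi_runit a : @hom Phi (a + 0) a).
Proof.
cart_simpl; congr (fmap Y _); apply: eq_based_of_partial => i.
case: (split_ordP i) => [j ->|[]//].
by congr Some; apply: val_inj.
Qed.

Lemma gamma_xi_sym (a b : nat) :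
  csym P _ _ \oc gamma_xi Y a b
  = gamma_xi Y b a \oc fmap (phi_restriction Y) (phi_sym a b : @hom Phi (a + b) (b + a)).
Proof.
apply: cprod_ext; cart_simpl; congr (fmap Y _);
  rewrite /based_proj1 /based_proj2 /based_of_fun based_comp_partial;
  apply: eq_based_of_partial => i /=.
all: by case: (split_ordP i) => j ->;
  rewrite ?phi_sym_lshift ?phi_sym_rshift ?split_lshift ?split_rshift.
Qed.

Definition colax_of_gamma : SColaxFun P :=
  {| cx_fun := phi_restriction Y; cx_xi := gamma_xi Y; cx_xi0 := cbang (Y 0);
     cx_nat := gamma_xi_natural; cx_coassoc := gamma_xi_coassoc;
     cx_lunit := gamma_xi_lunit; cx_runit := gamma_xi_runit; cx_sym := gamma_xi_sym |}.

End ColaxStructure.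

Section Morphism.
Variables (Y Y' : Functor GammaOp M) (t : NatTrans Y Y').

Definition phi_nattrans : NatTrans (phi_restriction Y) (phi_restriction Y') :=
  @Build_NatTrans Phi M (phi_restriction Y) (phi_restriction Y') (fun n => t n)
    (fun a b f => nt_natural t (based_of_fun f : @hom GammaOp a b)).

Lemma phi_nattrans_xi (a b : nat) :
  cx_xi (colax_of_gamma Y') a b \oc phi_nattrans (a + b) =
  ctens P (phi_nattrans a) (phi_nattrans b) \oc cx_xi (colax_of_gamma Y) a b.
Proof. by apply: cprod_ext; cart_simpl; apply: nt_natural. Qed.

Lemma phi_nattrans_xi0 :
  cx_xi0 (colax_of_gamma Y') \oc phi_nattrans 0 = cx_xi0 (colax_of_gamma Y).
Proof. exact: cbang_uniq. Qed.

Definition montrans_of_nattrans : MonTrans (colax_of_gamma Y) (colax_of_gamma Y') :=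
  @Build_MonTrans M P (colax_of_gamma Y) (colax_of_gamma Y') phi_nattrans
    phi_nattrans_xi phi_nattrans_xi0.

End Morphism.

Definition Gamma_to_SColax : Functor (FunctorCat GammaOp M) (SColax P).
Proof.
refine {| fob := (colax_of_gamma : FunctorCat GammaOp M -> SColax P);
          fmap := fun Y Y' t => montrans_of_nattrans t |}.
- by move=> Y; apply: montrans_eq; apply: nattrans_eq.
- by move=> X Y Z g f; apply: montrans_eq; apply: nattrans_eq.
Defined.

End GammaToColax.

(** * The two constructions are mutually inverse *)

Section RoundTrips.
Variables (M : Category) (P : Cartesian M).

Lemma gamma_fmap_based_of_fun (X : SColaxFun P) a b (f : 'I_a -> 'I_b) :
  gamma_fmap X (based_of_fun f) = fmap X f.
Proof.
rewrite /gamma_fmap based_of_partialK.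
by rewrite (fmap_Phi_comp X (lshift 1) f) comp_assoc cx_proj_lshift comp_id_l.
Qed.

Lemma gamma_fmap_based_proj (X : SColaxFun P) a b :
  cpair (gamma_fmap X (based_proj1 a b)) (gamma_fmap X (based_proj2 a b)) = cx_xi X a b.
Proof.
rewrite /gamma_fmap !based_of_partialK.
have -> : total_of_partial (fun i : 'I_(a + b) => if split i is inl j then Some j else None)
    = phi_tens (fun j => j) (@to_ord1 b).
  by apply: functional_extensionality => i; rewrite /total_of_partial /phi_tens; case: split.
have -> : total_of_partial (fun i : 'I_(a + b) => if split i is inr k then Some k else None)
    = fun i => phi_tens (fun j => j) (@to_ord1 a) (phi_sym a b i).
  apply: functional_extensionality => i; rewrite /total_of_partial.
  by case: (split_ordP i) => j ->; rewrite ?split_lshift ?split_rshift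
    ?phi_sym_lshift ?phi_sym_rshift ?phi_tens_lshift ?phi_tens_rshift.
rewrite fmap_Phi_comp comp_assoc !cx_proj_tens !fmap_Phi_id !comp_id_l.
by rewrite -comp_assoc -cx_sym comp_assoc cpr1_csym cpair_eta.
Qed.

Lemma gamma_fmap_colax_of_gamma (Y : Functor GammaOp M) m n (g : based_map m n) :
  gamma_fmap (colax_of_gamma P Y) g = fmap Y g.
Proof.
rewrite /gamma_fmap /cx_proj /= /gamma_xi /phi_fmap cpair_pr1 fmap_GammaOp_comp.
congr (fmap Y _); rewrite -[RHS](partial_of_basedK g) /based_proj1 /based_of_fun.
rewrite based_comp_partial; apply: eq_based_of_partial => i /=.
by rewrite /total_of_partial; case: (partial_of_based g i) => [j|] /=;
  rewrite ?split_lshift ?split_rshift.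
Qed.

Lemma SColax_to_GammaK (X : SColaxFun P) :
  Gamma_to_SColax P (SColax_to_Gamma P X) = X.
Proof.
case: X => [[o m p q] xi xi0 n c l r s]; apply: scolax_ext.
- exact: gamma_fmap_based_of_fun.
- exact: gamma_fmap_based_proj.
- by symmetry; apply: cbang_uniq.
Qed.

Lemma Gamma_to_SColaxK (Y : Functor GammaOp M) :
  SColax_to_Gamma P (Gamma_to_SColax P Y) = Y.
Proof. by case: Y => o m p q; apply: functor_ext; apply: gamma_fmap_colax_of_gamma. Qed.

End RoundTrips.

Theorem proposition3p1p1 (M : Category) (P : Cartesian M) :
  cat_iso (SColax P) (FunctorCat GammaOp M).
Proof.
exists (SColax_to_Gamma P), (Gamma_to_SColax P); split.
- exists (@SColax_to_GammaK M P) => X X' s.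
  by apply: hom_cast_montrans => n e1 e2; apply: hom_cast_refl.
- exists (@Gamma_to_SColaxK M P) => Y Y' t.
  by apply: hom_cast_nattrans => n e1 e2; apply: hom_cast_refl.
Qed.
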